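(* Let $t\ge 2$, let $n_1,\dots,n_t$ be positive integers, and let $G=K_{n_1,\dots,n_t}$ be the complete $t$-partite graph with partite sets $V_1,\dots,V_t$, $|V_i|=n_i$. Let $N_t=\{1,\dots,t\}$ and $f(I)=\sum_{i\in I}n_i$ for $I\subseteq N_t$. Let $p$ be a positive integer with $f(N_t)>p$. Let $D$ be an optimal $\gamma_p(G)$-set, let $\ell=\min\{|D_i|: i\in N_t\setminus I_D\}$, $A=\{i\in N_t\setminus I_D: |D_i|=\ell+1\}$, and $\delta_A=0$ if $A=\emptyset$, $\delta_A=1$ otherwise. Then $\gamma_p(G)\ge p+\ell+\delta_A$.
   Context: A set $S\subseteq V(G)$ is a $p$-dominating set of $G$ if every vertex $v\in V(G)\setminus S$ has at least $p$ neighbors in $S$. The $p$-domination number $\gamma_p(G)$ is the minimum cardinality of a $p$-dominating set of $G$, and a $\gamma_p(G)$-set is a $p$-dominating set of cardinality $\gamma_p(G)$. For $D\subseteq V(G)$ write $D_i=V_i\cap D$ for $i\in N_t$ and $I_D=\{i\in N_t: |D_i|=|V_i|\}$. For a $\gamma_p(G)$-set $D$ with $|I_D|<t$ define $$\mu(D)=\sum_{i\in N_t\setminus I_D}\left|\,|D_i|-\frac{|D|-f(I_D)}{t-|I_D|}\right|.$$ A $\gamma_p(G)$-set $D$ is optimal if: (1) $f(I_D)<p$; (2) $|I_D|\ge |I_S|$ for every $\gamma_p(G)$-set $S$; (3) $\mu(D)\le\mu(S)$ for every $\gamma_p(G)$-set $S$ with $I_S=I_D$. *)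

From mathcomp Require Import all_boot all_order all_algebra.
Set Implicit Arguments. Unset Strict Implicit. Unset Printing Implicit Defensive.
Import Order.TTheory GRing.Theory Num.Theory.

(* Complete t-partite graph K_{n_1,...,n_t}: partite sets indexed by 'I_t
   (i.e. N_t = {0,...,t-1}); vertex (i, j) with j < n i lies in V_i. *)
Definition Vtx (t : nat) (n : 'I_t -> nat) : finType := {i : 'I_t & 'I_(n i)}.

Section Multipartite.
Variables (t : nat) (n : 'I_t -> nat).
Local Notation V := (Vtx n).

Definition adj (u v : V) : bool := tag u != tag v.

Definition part (i : 'I_t) : {set V} := [set v : V | tag v == i].

Definition p_dominating (p : nat) (S : {set V}) : bool :=
  [forall v, (v \notin S) ==> (p <= #|[set u in S | adj u v]|)].

(* gamma_p(G): minimum cardinality of a p-dominating set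
   (V itself is p-dominating, so #|V| is a safe default) *)
Definition gamma_p (p : nat) : nat :=
  \big[minn/#|V|]_(S : {set V} | p_dominating p S) #|S|.

Definition gamma_set (p : nat) (D : {set V}) : bool :=
  p_dominating p D && (#|D| == gamma_p p).

Definition Dpart (D : {set V}) (i : 'I_t) : {set V} := D :&: part i.
Definition ID (D : {set V}) : {set 'I_t} := [set i | #|Dpart D i| == #|part i|].

Definition fsum (I : {set 'I_t}) : nat := \sum_(i in I) n i.

Definition mu (D : {set V}) : rat :=
  \sum_(i in ~: ID D)
    `| (#|Dpart D i|)%:R
       - ((#|D|%:R - (fsum (ID D))%:R) / (t%:R - (#|ID D|)%:R)) |.

Definition optimal (p : nat) (D : {set V}) : Prop :=
  [/\ gamma_set p D, #|ID D| < t,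
      fsum (ID D) < p,
      (forall S, gamma_set p S -> #|ID S| <= #|ID D|) &
      (forall S, gamma_set p S -> ID S = ID D -> (mu D <= mu S)%R)].

Definition ell (D : {set V}) : nat :=
  \big[minn/#|V|]_(i in ~: ID D) #|Dpart D i|.

Definition Aset (D : {set V}) : {set 'I_t} :=
  [set i in ~: ID D | #|Dpart D i| == (ell D).+1].

End Multipartite.

From mathcomp Require Import all_boot all_order all_algebra.
Import Order.TTheory.

Set Implicit Arguments.
Unset Strict Implicit.
Unset Printing Implicit Defensive.

(* A vertex v of V_i outside D is adjacent
   exactly to the vertices of D outside V_i, so p-domination at v gives
   p <= |D| - |D_i|.  Taking i with |D_i| = l, or |D_i| = l + 1 when A is
   nonempty, yields the bound. *)

Lemma setC_neq0 (T : finType) (A : {set T}) : #|A| < #|T| -> ~: A != set0.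
Proof. by move=> ltAT; rewrite -card_gt0 -(ltn_add2l #|A|) addn0 cardsC. Qed.

Section Multipartite.
Variables (t : nat) (n : 'I_t -> nat).
Local Notation V := (Vtx n).

Lemma adj_neighbours_in (S : {set V}) (v : V) :
  [set u in S | adj u v] = S :\: part n (tag v).
Proof. by apply/setP => u; rewrite !inE andbC. Qed.

Lemma exists_notin_Dpart (D : {set V}) (i : 'I_t) :
  i \notin ID D -> exists2 v, v \in part n i & v \notin D.
Proof.
rewrite inE => not_full.
have : part n i :\: D != set0.
  by apply: contra not_full; rewrite setD_eq0 /Dpart => sub; rewrite (setIidPr sub).
by case/set0Pn => v; rewrite inE => /andP [vD vi]; exists v.
Qed.

Lemma p_dominating_card_Dpart (p : nat) (D : {set V}) (i : 'I_t) :
  p_dominating p D -> i \in ~: ID D -> p + #|Dpart D i| <= #|D|.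
Proof.
move=> /forallP domD; rewrite inE => /exists_notin_Dpart [v vi vD].
have := domD v; rewrite vD adj_neighbours_in.
move: vi; rewrite inE => /eqP -> /= le_p.
by rewrite -(cardsID (part n i) D) [X in _ <= X]addnC leq_add2r.
Qed.

Lemma ell_le_Dpart (D : {set V}) (i : 'I_t) :
  i \in ~: ID D -> ell D <= #|Dpart D i|.
Proof. exact: (bigmin_le_cond #|V| (fun j => #|Dpart D j|)). Qed.

End Multipartite.

Theorem lemma6 (t : nat) (n : 'I_t -> nat) (p : nat) (D : {set Vtx n}) :
  2 <= t ->
  (forall i, 0 < n i) ->
  0 < p ->
  p < fsum n [set: 'I_t] ->
  optimal p D ->
  p + ell D + (Aset D != set0) <= gamma_p n p.
Proof.
move=> _ _ _ _ [/andP [domD /eqP <-] lt_IDt _ _ _].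
have [-> | [j]] := set_0Vmem (Aset D).
  have /set0Pn [i iID] : ~: ID D != set0 by rewrite setC_neq0 ?card_ord.
  rewrite eqxx addn0; apply: leq_trans (p_dominating_card_Dpart domD iID).
  by rewrite leq_add2l ell_le_Dpart.
rewrite inE => /andP [jID /eqP Dj].
have -> : Aset D != set0 by apply/set0Pn; exists j; rewrite inE jID Dj eqxx.
by rewrite addn1 -addnS -Dj p_dominating_card_Dpart.
Qed.
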